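(* Let $\Phi$ be an irreducible root system (e.g. that of a simple complex Lie algebra) with Weyl group $W$, highest root $\theta$, and positive roots determined by a Borel subalgebra. If $\alpha\in\Phi$ is a root of the same length as $\theta$, then there is a unique maximal element $w\in W$ in the Bruhat order among those satisfying $w^{-1}\theta=\alpha$.
   Context: The Bruhat order on $W$ is with respect to the simple reflections determined by the choice of positive roots. *)

From HB Require Import structures.
From mathcomp Require Import all_boot all_order all_algebra.
From mathcomp Require Import reals.
From Stdlib Require Import Relations.
Set Implicit Arguments. Unset Strict Implicit. Unset Printing Implicit Defensive.
Import Order.TTheory GRing.Theory Num.Theory.
Local Open Scope ring_scope.

Section RootSystems.
Variables (R : realType) (n : nat).
Implicit Types (u v a b : 'cV[R]_n) (Phi Delta : seq 'cV[R]_n) (w : 'M[R]_n).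

Definition dot u v : R := (u^T *m v) 0 0.

Definition refl_mx a : 'M[R]_n := 1%:M - (2 / dot a a) *: (a *m a^T).

(* (crystallographic, reduced) root system spanning R^n *)
Definition is_root_system Phi : Prop :=
  [/\ 0 \notin Phi,
      (forall v, exists c : 'cV[R]_n -> R, v = \sum_(a <- Phi) c a *: a),
      (forall a b, a \in Phi -> b \in Phi -> refl_mx a *m b \in Phi),
      (forall a b, a \in Phi -> b \in Phi -> (2 * dot b a / dot a a) \is a Num.int)
    & (forall a (c : R), a \in Phi -> c *: a \in Phi -> c = 1 \/ c = -1)].

Definition irreducible_rs Phi : Prop :=
  forall P : pred 'cV[R]_n,
    (forall a b, a \in Phi -> b \in Phi -> P a -> ~~ P b -> dot a b = 0) ->
    all P Phi \/ all (predC P) Phi.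

Definition nonneg_comb Delta v : Prop :=
  exists c : 'cV[R]_n -> nat, v = \sum_(d <- Delta) (c d)%:R *: d.

Definition is_base Phi Delta : Prop :=
  [/\ uniq Delta, {subset Delta <= Phi},
      (forall c : 'cV[R]_n -> R, \sum_(d <- Delta) c d *: d = 0 ->
          forall d, d \in Delta -> c d = 0)
    & (forall b, b \in Phi -> nonneg_comb Delta b \/ nonneg_comb Delta (- b))].

Definition positive_root Phi Delta b : Prop := b \in Phi /\ nonneg_comb Delta b.

Definition highest_root Phi Delta theta : Prop :=
  theta \in Phi /\ forall b, b \in Phi -> nonneg_comb Delta (theta - b).

Definition word_mx (s : seq 'cV[R]_n) : 'M[R]_n :=
  foldr (fun a M => refl_mx a *m M) 1%:M s.

Definition in_Weyl Phi w : Prop :=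
  exists s : seq 'cV[R]_n, {subset s <= Phi} /\ w = word_mx s.

Definition is_length Delta w (l : nat) : Prop :=
  (exists s, {subset s <= Delta} /\ size s = l /\ w = word_mx s) /\
  (forall s, {subset s <= Delta} -> w = word_mx s -> (l <= size s)%N).

Definition bruhat_step Phi Delta (u w : 'M[R]_n) : Prop :=
  exists b, b \in Phi /\ w = u *m refl_mx b /\
  exists lu lw, [/\ is_length Delta u lu, is_length Delta w lw & (lu < lw)%N].

Definition bruhat_le Phi Delta : relation 'M[R]_n :=
  clos_refl_trans _ (bruhat_step Phi Delta).

End RootSystems.

From HB Require Import structures.
From mathcomp Require Import all_boot all_order all_algebra.
From mathcomp Require Import reals boolp.
From mathcomp Require Import ring lra zify.
From Stdlib Require Import Relations.
Set Implicit Arguments. Unset Strict Implicit. Unset Printing Implicit Defensive.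
Import Order.TTheory GRing.Theory Num.Theory.
Local Open Scope ring_scope.

(* The condition [w^-1 theta = alpha] reads [w alpha = theta].  Roots of the
   same length in an irreducible root system are Weyl-conjugate, so such [w]
   exist.  If some simple reflection [s_b] fixing [theta] is not a left descent
   of a solution [w], then [s_b w] is again a solution, one longer and above [w]
   in the Bruhat order; climbing this way ends at a solution [w_top] for which
   all these reflections are left descents.  There is only one such solution:
   for two of them [u] and [v], [x = v u^-1] fixes [theta]; since [theta] is
   dominant, the last letter [s_b] of a reduced word of [x^-1] gives a simple
   root [b] and a positive root [-x^-1 b], both orthogonal to [theta], which the
   descent conditions at [v] and [u] send to roots of opposite signs.  Hence
   every solution lies below [w_top], which is the unique maximal solution.
   Lengths are computed as the number of positive roots made negative. *)

Lemma bigD2_seq (T : eqType) (r : seq T) (F : T -> nat) x y :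
  uniq r -> x \in r -> y \in r -> x != y ->
  (\sum_(i <- r) F i = F x + F y + \sum_(i <- r | (i != x) && (i != y)) F i)%N.
Proof.
move=> ur xr yr xy; rewrite (bigD1_seq x) //= -big_filter (bigD1_seq y) //=.
- by rewrite big_filter_cond addnA.
- by rewrite mem_filter /= eq_sym xy.
- exact: filter_uniq.
Qed.

Lemma psumr_seq_eq0 (R : numDomainType) (T : eqType) (r : seq T) (F : T -> R) x :
  (forall y, y \in r -> 0 <= F y) -> \sum_(y <- r) F y = 0 -> x \in r -> F x = 0.
Proof.
move=> F_ge0 + xr; rewrite (big_rem x xr) /= => /eqP.
rewrite paddr_eq0 ?F_ge0 // => [/andP[/eqP] //|].
by rewrite big_seq sumr_ge0 // => y /mem_rem /F_ge0.
Qed.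

Lemma intr_gt0_succ (R : archiNumDomainType) (x : R) :
  x \is a Num.int -> 0 < x -> exists m : nat, x = m.+1%:R.
Proof.
move=> xZ x_gt0; have /natrP[[|m] xm] : x \is a Num.nat by rewrite natrEint xZ ltW.
  by move: x_gt0; rewrite xm ltxx.
by exists m.
Qed.

Section Reflections.
Variables (R : realType) (n : nat).
Implicit Types (u v a b : 'cV[R]_n) (w : 'M[R]_n) (s t : seq 'cV[R]_n).

Lemma mulmx_colP (A B : 'M[R]_n) : (forall v, A *m v = B *m v) -> A = B.
Proof.
move=> eqAB; apply/trmx_inj/eqP/mulmxP => u.
by rewrite -[u]trmxK -!trmx_mul eqAB.
Qed.

Lemma dotC u v : dot u v = dot v u.
Proof. by rewrite /dot -[in LHS](trmxK (u^T *m v)) trmx_mul trmxK [in LHS]mxE. Qed.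

Lemma dotDr u v a : dot u (v + a) = dot u v + dot u a.
Proof. by rewrite /dot mulmxDr mxE. Qed.

Lemma dotDl u v a : dot (v + a) u = dot v u + dot a u.
Proof. by rewrite dotC dotDr !(dotC u). Qed.

Lemma dotZr u v c : dot u (c *: v) = c * dot u v.
Proof. by rewrite /dot -scalemxAr mxE. Qed.

Lemma dotZl u v c : dot (c *: v) u = c * dot v u.
Proof. by rewrite dotC dotZr dotC. Qed.

Lemma dotNr u v : dot u (- v) = - dot u v.
Proof. by rewrite -scaleN1r dotZr mulN1r. Qed.

Lemma dotNl u v : dot (- v) u = - dot v u.
Proof. by rewrite dotC dotNr dotC. Qed.

Lemma dotBr u v a : dot u (v - a) = dot u v - dot u a.
Proof. by rewrite dotDr dotNr. Qed.

Lemma dotBl u v a : dot (v - a) u = dot v u - dot a u.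
Proof. by rewrite dotDl dotNl. Qed.

Lemma dot_mulmxl w u v : dot (w *m u) v = dot u (w^T *m v).
Proof. by rewrite /dot trmx_mul mulmxA. Qed.

Lemma dot_mulmxr w u v : dot u (w *m v) = dot (w^T *m u) v.
Proof. by rewrite dot_mulmxl trmxK. Qed.

Lemma dot_sumr (I : Type) (r : seq I) (F : I -> 'cV[R]_n) u :
  dot u (\sum_(i <- r) F i) = \sum_(i <- r) dot u (F i).
Proof.
elim: r => [|i r IH]; last by rewrite !big_cons dotDr IH.
by rewrite !big_nil /dot mulmx0 mxE.
Qed.

Lemma dotE u v : dot u v = \sum_i u i 0 * v i 0.
Proof. by rewrite /dot mxE; apply: eq_bigr => i _; rewrite mxE. Qed.

Lemma dotvv_ge0 u : 0 <= dot u u.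
Proof. by rewrite dotE sumr_ge0 // => i _; rewrite -expr2 sqr_ge0. Qed.

Lemma dotvv_eq0 u : dot u u = 0 -> u = 0.
Proof.
rewrite dotE => uu0; apply/matrixP => i j; rewrite (ord1 j) mxE.
have sq_ge0 (k : 'I_n) : true -> 0 <= u k 0 * u k 0 by rewrite -expr2 sqr_ge0.
by move/eqP: (psumr_eq0P sq_ge0 uu0 (i := i) isT); rewrite mulf_eq0 orbb => /eqP.
Qed.

Lemma dotvv_gt0 u : u != 0 -> 0 < dot u u.
Proof.
move=> u0; rewrite lt_def dotvv_ge0 andbT.
by apply: contraNneq u0 => /dotvv_eq0 ->.
Qed.

Lemma refl_mxE a v : refl_mx a *m v = v - (2 * dot v a / dot a a) *: a.
Proof.
rewrite /refl_mx mulmxBl mul1mx -scalemxAl -mulmxA [a^T *m v]mx11_scalar.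
rewrite mul_mx_scalar scalerA; congr (_ - _ *: _).
by rewrite -/(dot a v) dotC mulrAC mulrC.
Qed.

Lemma tr_refl_mx a : (refl_mx a)^T = refl_mx a.
Proof. by rewrite /refl_mx linearB /= trmx1 linearZ /= trmx_mul trmxK. Qed.

Lemma refl_mxK a : a != 0 -> refl_mx a *m refl_mx a = 1%:M.
Proof.
move=> a0; apply: mulmx_colP => v; rewrite -mulmxA mul1mx !refl_mxE dotBl dotZl.
have aa0 : dot a a != 0 by rewrite gt_eqF // dotvv_gt0.
set c := 2 * dot v a / dot a a.
have -> : 2 * (dot v a - c * dot a a) / dot a a = - c by rewrite /c; field.
by rewrite scaleNr opprK subrK.
Qed.

Lemma refl_mxN a : refl_mx (- a) = refl_mx a.
Proof.
apply: mulmx_colP => v; rewrite !refl_mxE dotNr dotNl dotNr opprK.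
by rewrite mulrN mulNr scaleNr scalerN opprK.
Qed.

Lemma refl_mx_self a : a != 0 -> refl_mx a *m a = - a.
Proof.
move=> a0; rewrite refl_mxE mulfK ?gt_eqF ?dotvv_gt0 //.
by rewrite scaler_nat mulr2n opprD addrA subrr add0r.
Qed.

Lemma refl_mx_orth a v : dot v a = 0 -> refl_mx a *m v = v.
Proof. by move=> va0; rewrite refl_mxE va0 mulr0 mul0r scale0r subr0. Qed.

Lemma refl_mx_conj w a : w^T *m w = 1%:M ->
  refl_mx (w *m a) = w *m refl_mx a *m w^T.
Proof.
move=> wTw; have wwT := mulmx1C wTw; apply: mulmx_colP => v.
rewrite -!mulmxA !refl_mxE mulmxBr mulmxA wwT mul1mx -scalemxAr.
by rewrite [dot v _]dot_mulmxr [dot (w *m a) _]dot_mulmxl mulmxA wTw mul1mx.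
Qed.

Lemma refl_mx_swap u v : dot u u = dot v v -> u != v -> refl_mx (u - v) *m u = v.
Proof.
move=> uv; rewrite -subr_eq0 => /dotvv_gt0/lt0r_neq0 d0; rewrite refl_mxE.
have -> : 2 * dot u (u - v) = dot (u - v) (u - v).
  by rewrite !dotBl !dotBr uv (dotC u v); ring.
by rewrite divff // scale1r opprB addrCA subrr addr0.
Qed.

Lemma word_mx_cons a s : word_mx (a :: s) = refl_mx a *m word_mx s.
Proof. by []. Qed.

Lemma word_mx_cat s t : word_mx (s ++ t) = word_mx s *m word_mx t.
Proof. by elim: s => [|a s IH] /=; rewrite ?mul1mx // IH mulmxA. Qed.

Lemma word_mx_rcons s a : word_mx (rcons s a) = word_mx s *m refl_mx a.
Proof. by rewrite -cats1 word_mx_cat /= mulmx1. Qed.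

Lemma tr_word_mx s : (word_mx s)^T = word_mx (rev s).
Proof.
elim: s => [|a s IH]; first by rewrite trmx1.
by rewrite word_mx_cons trmx_mul IH tr_refl_mx rev_cons word_mx_rcons.
Qed.

Lemma word_mx_orth s : 0 \notin s -> (word_mx s)^T *m word_mx s = 1%:M.
Proof.
elim: s => [|a s IH] /=; first by rewrite trmx1 mul1mx.
rewrite in_cons negb_or eq_sym => /andP[a0 /IH wTw].
by rewrite trmx_mul tr_refl_mx -mulmxA (mulmxA (refl_mx a)) refl_mxK // mul1mx.
Qed.

End Reflections.

Section RootSystem.
Variables (R : realType) (n : nat) (Phi Delta : seq 'cV[R]_n).
Hypothesis rsPhi : is_root_system Phi.
Hypothesis baseDelta : is_base Phi Delta.
Implicit Types (u v a b d g : 'cV[R]_n) (w : 'M[R]_n) (s t : seq 'cV[R]_n).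

Lemma root_neq0 a : a \in Phi -> a != 0.
Proof. by case: rsPhi => Phi0 _ _ _ _ aPhi; apply: contraNneq Phi0 => <-. Qed.

Lemma root_refl a b : a \in Phi -> b \in Phi -> refl_mx a *m b \in Phi.
Proof. by case: rsPhi => _ _ + _ _; apply. Qed.

Lemma rootN a : a \in Phi -> - a \in Phi.
Proof. by move=> aPhi; rewrite -refl_mx_self ?root_neq0 ?root_refl. Qed.

Lemma root_cartan_int a b : a \in Phi -> b \in Phi -> 2 * dot b a / dot a a \is a Num.int.
Proof. by case: rsPhi => _ _ _ + _; apply. Qed.

Lemma base_root d : d \in Delta -> d \in Phi.
Proof. by case: baseDelta => _ + _ _; apply. Qed.

Lemma base_uniq : uniq Delta.
Proof. by case: baseDelta. Qed.

Lemma sub_base_root s : {subset s <= Delta} -> {subset s <= Phi}.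
Proof. by move=> sDelta a /sDelta /base_root. Qed.

Definition pos v : bool := `[< nonneg_comb Delta v >].

Lemma posP v : reflect (nonneg_comb Delta v) (pos v).
Proof. exact: asboolP. Qed.

Lemma base_coef_unique (c c' : 'cV[R]_n -> R) :
  \sum_(d <- Delta) c d *: d = \sum_(d <- Delta) c' d *: d ->
  forall d, d \in Delta -> c d = c' d.
Proof.
move=> eq_cc' d dDelta; case: baseDelta => _ _ free _; apply/eqP; rewrite -subr_eq0.
apply/eqP/(free (fun e => c e - c' e)) => //.
rewrite (eq_bigr (fun e => c e *: e - c' e *: e)) ?sumrB ?eq_cc' ?subrr //.
by move=> e _; rewrite scalerBl.
Qed.

Lemma sum_base1 (f : 'cV[R]_n -> R) d : d \in Delta ->
  (forall e, e \in Delta -> e != d -> f e = 0) ->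
  \sum_(e <- Delta) f e *: e = f d *: d.
Proof.
move=> dDelta f0; rewrite (bigD1_seq d) //= ?base_uniq // big_seq_cond big1 ?addr0 //.
by move=> e /andP[eDelta ed]; rewrite f0 // scale0r.
Qed.

Lemma sum_base_delta d (k : R) : d \in Delta ->
  \sum_(e <- Delta) (if e == d then k else 0) *: e = k *: d.
Proof. by move=> dDelta; rewrite (sum_base1 dDelta) ?eqxx // => e _ /negPf ->. Qed.

Lemma pos_oppr_eq0 v : pos v -> pos (- v) -> v = 0.
Proof.
move=> /posP[c ->] /posP[c' Ec'].
have E : \sum_(d <- Delta) ((c d + c' d)%N)%:R *: d = \sum_(d <- Delta) 0 *: d.
  rewrite (eq_bigr (fun d => (c d)%:R *: d + (c' d)%:R *: d)); last first.
    by move=> d _; rewrite natrD scalerDl.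
  by rewrite big_split /= -Ec' subrr big1 // => d _; rewrite scale0r.
rewrite big_seq big1 // => d /(base_coef_unique E)/eqP.
by rewrite pnatr_eq0 addn_eq0 => /andP[/eqP -> _]; rewrite scale0r.
Qed.

Lemma root_posVoppr a : a \in Phi -> pos a || pos (- a).
Proof. by case: baseDelta => _ _ _ /[apply] -[] /posP ->; rewrite ?orbT. Qed.

Lemma root_pos_oppr a : a \in Phi -> pos a -> ~~ pos (- a).
Proof. by move=> aPhi pa; apply/negP => /(pos_oppr_eq0 pa)/eqP; apply/negP/root_neq0. Qed.

Lemma root_npos_oppr a : a \in Phi -> ~~ pos a -> pos (- a).
Proof. by move=> /root_posVoppr/orP[->|]. Qed.

Lemma pos_base d : d \in Delta -> pos d.
Proof.
move=> dDelta; apply/posP; exists (fun e => nat_of_bool (e == d)).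
rewrite -[LHS]scale1r -(sum_base_delta 1 dDelta).
by apply: eq_bigr => e _; case: (e == d).
Qed.

Lemma pos0 : pos 0.
Proof. by apply/posP; exists (fun _ => 0%N); rewrite big1 // => d _; rewrite scale0r. Qed.

Lemma posD u v : pos u -> pos v -> pos (u + v).
Proof.
move=> /posP[c ->] /posP[c' ->]; apply/posP; exists (fun d => (c d + c' d)%N).
by rewrite -big_split /=; apply: eq_bigr => d _; rewrite natrD scalerDl.
Qed.

Lemma posMn (m : nat) u : pos u -> pos (m%:R *: u).
Proof.
move=> /posP[c ->]; apply/posP; exists (fun d => (m * c d)%N).
by rewrite scaler_sumr; apply: eq_bigr => d _; rewrite natrM scalerA.
Qed.

Lemma pos_sum (I : eqType) (r : seq I) (F : I -> 'cV[R]_n) :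
  (forall i, i \in r -> pos (F i)) -> pos (\sum_(i <- r) F i).
Proof. by move=> posF; rewrite big_seq; apply: (big_ind pos) => //; [exact: pos0|exact: posD]. Qed.

Lemma refl_base_pos b g : b \in Delta -> g \in Phi -> pos g -> g != b ->
  pos (refl_mx b *m g).
Proof.
move=> bDelta gPhi /posP[c Ec] gb; have bPhi := base_root bDelta.
case/orP: (root_posVoppr (root_refl bPhi gPhi)) => // /posP[e Ee].
set k := 2 * dot g b / dot b b.
have E : \sum_(d <- Delta) ((c d + e d)%N)%:R *: d =
         \sum_(d <- Delta) (if d == b then k else 0) *: d.
  rewrite sum_base_delta // (eq_bigr (fun d => (c d)%:R *: d + (e d)%:R *: d)).
    by rewrite big_split /= -Ec -Ee refl_mxE opprB addrCA subrr addr0.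
  by move=> d _; rewrite natrD scalerDl.
have gE : g = (c b)%:R *: b.
  rewrite Ec (sum_base1 bDelta) // => d dDelta db.
  move: (base_coef_unique E dDelta); rewrite (negPf db) => /eqP.
  by rewrite pnatr_eq0 addn_eq0 => /andP[/eqP ->].
case: rsPhi => _ _ _ _ /(_ b (c b)%:R bPhi); rewrite -gE => /(_ gPhi)[cb1|cbN1].
  by move: gb; rewrite gE cb1 scale1r eqxx.
by have := ler0n R (c b); rewrite cbN1 ler0N1.
Qed.

Lemma refl_base_posE b g : b \in Delta -> g \in Phi -> g != b -> g != - b ->
  pos (refl_mx b *m g) = pos g.
Proof.
move=> bDelta gPhi gb gNb; have bPhi := base_root bDelta.
case pg: (pos g); first exact: refl_base_pos.
apply/negbTE; rewrite -[refl_mx b *m g]opprK; apply/root_pos_oppr.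
  exact/rootN/root_refl.
rewrite -mulmxN; apply: refl_base_pos => //; first exact: rootN.
  by apply: root_npos_oppr; rewrite ?pg.
by apply: contraNneq gNb => <-; rewrite opprK.
Qed.

Lemma word_mx_root s a : {subset s <= Phi} -> a \in Phi -> word_mx s *m a \in Phi.
Proof.
elim: s => [|c s IH] sPhi aPhi; first by rewrite mul1mx.
rewrite word_mx_cons -mulmxA; apply: root_refl; first by rewrite sPhi ?mem_head.
by apply: IH => // e es; rewrite sPhi // in_cons es orbT.
Qed.

Lemma in_Weyl1 : in_Weyl Phi 1%:M.
Proof. by exists [::]. Qed.

Lemma in_Weyl_refl a : a \in Phi -> in_Weyl Phi (refl_mx a).
Proof. by move=> aPhi; exists [:: a]; split; [move=> e /[!inE] /eqP ->|rewrite /= mulmx1]. Qed.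

Lemma in_Weyl_mul w1 w2 : in_Weyl Phi w1 -> in_Weyl Phi w2 -> in_Weyl Phi (w1 *m w2).
Proof.
case=> s [sPhi ->] [t [tPhi ->]]; exists (s ++ t); split; last by rewrite word_mx_cat.
by move=> e; rewrite mem_cat => /orP[/sPhi|/tPhi].
Qed.

Lemma in_Weyl_tr w : in_Weyl Phi w -> in_Weyl Phi w^T.
Proof.
case=> s [sPhi ->]; exists (rev s); rewrite tr_word_mx; split=> // e.
by rewrite mem_rev => /sPhi.
Qed.

Lemma in_Weyl_root w a : in_Weyl Phi w -> a \in Phi -> w *m a \in Phi.
Proof. by case=> s [sPhi ->]; apply: word_mx_root. Qed.

Lemma in_Weyl_word s : {subset s <= Delta} -> in_Weyl Phi (word_mx s).
Proof. by exists s; split=> //; apply: sub_base_root. Qed.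

Lemma in_Weyl_orth w : in_Weyl Phi w -> w^T *m w = 1%:M.
Proof.
case=> s [sPhi ->]; apply: word_mx_orth; apply/negP => /sPhi.
by case: rsPhi => /negP.
Qed.

Lemma in_Weyl_orthC w : in_Weyl Phi w -> w *m w^T = 1%:M.
Proof. by move/in_Weyl_orth/mulmx1C. Qed.

Lemma invmx_Weyl w : in_Weyl Phi w -> invmx w = w^T.
Proof.
move=> /in_Weyl_orth wTw; have [_ wU] := mulmx1_unit wTw.
by rewrite -[invmx w]mul1mx -wTw -mulmxA mulmxV // mulmx1.
Qed.

(* The inversion number of [w]; it turns out to be the length of [w]. *)
Definition ninv w : nat :=
  (\sum_(g <- undup Phi) nat_of_bool (pos g && pos (- (w *m g))))%N.

Lemma ninv1 : ninv 1%:M = 0%N.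
Proof.
rewrite /ninv big_seq big1 // => g; rewrite mem_undup mul1mx => gPhi.
by case pg: (pos g); rewrite //= (negPf (root_pos_oppr gPhi pg)).
Qed.

Lemma ninv_le_roots w : (ninv w <= size (undup Phi))%N.
Proof. by rewrite /ninv -sum1_size leq_sum // => g _; case: (_ && _). Qed.

Lemma perm_refl_roots b : b \in Phi ->
  perm_eq (undup Phi) (map (mulmx (refl_mx b)) (undup Phi)).
Proof.
move=> bPhi; have sbK := refl_mxK (root_neq0 bPhi).
have sbK' v : refl_mx b *m (refl_mx b *m v) = v by rewrite mulmxA sbK mul1mx.
apply: uniq_perm; rewrite ?undup_uniq ?(map_inj_uniq (can_inj sbK')) ?undup_uniq //.
move=> v; rewrite mem_undup; apply/idP/mapP => [vPhi|[u]].
  by exists (refl_mx b *m v); rewrite ?sbK' // mem_undup root_refl.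
by rewrite mem_undup => uPhi ->; rewrite root_refl.
Qed.

(* A simple reflection [s_b] permutes the positive roots other than [b], so
   right multiplication by it changes the inversion set only at [b]. *)
Lemma ninv_mul_refl_base w b : b \in Delta ->
  (ninv (w *m refl_mx b) + pos (- (w *m b)) = ninv w + pos (w *m b))%N.
Proof.
move=> bDelta; have bPhi := base_root bDelta; have b0 := root_neq0 bPhi.
have bNb : b != - b.
  apply: contraNneq b0 => /eqP; rewrite -subr_eq0 opprK -mulr2n -scaler_nat.
  by rewrite scaler_eq0 pnatr_eq0 orFb => /eqP ->.
pose F (v : 'cV[R]_n) g := nat_of_bool (pos v && pos (- (w *m g))).
have -> : ninv (w *m refl_mx b) = (\sum_(g <- undup Phi) F (refl_mx b *m g) g)%N.
  rewrite /ninv (perm_big _ (perm_refl_roots bPhi)) big_map; apply: eq_bigr => g _.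
  by rewrite /F -mulmxA (mulmxA (refl_mx b)) refl_mxK // mul1mx.
have [Pu bPhi' NbPhi] : [/\ uniq (undup Phi), b \in undup Phi & - b \in undup Phi].
  by rewrite undup_uniq !mem_undup rootN.
rewrite /ninv !(bigD2_seq _ Pu bPhi' NbPhi bNb).
set S1 := (X in (_ + _ + X + _)%N = _); set S2 := (X in _ = (_ + _ + X + _)%N).
have -> : S1 = S2.
  rewrite /S1 /S2 big_seq_cond [RHS]big_seq_cond; apply: eq_bigr => g /andP[].
  by rewrite mem_undup => gPhi /andP[gb gNb]; rewrite /F refl_base_posE.
have pb := pos_base bDelta.
rewrite /F !mulmxN refl_mx_self // !opprK pb (negPf (root_pos_oppr bPhi pb)) /=.
by case: (pos (w *m b)); case: (pos (- (w *m b))); rewrite /= ?add0n ?addn0 ?addn1 ?add1n.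
Qed.

Lemma exchange_condition s b : {subset s <= Delta} -> b \in Delta ->
  pos (- (word_mx s *m b)) ->
  exists s1 c s2, s = s1 ++ c :: s2 /\ word_mx (rcons s b) = word_mx (s1 ++ s2).
Proof.
move=> + bDelta; have bPhi := base_root bDelta.
elim: s => [|c s IH] csDelta /=.
  by rewrite mul1mx => pNb; have := root_pos_oppr bPhi (pos_base bDelta); rewrite pNb.
have sDelta : {subset s <= Delta} by move=> e es; rewrite csDelta // in_cons es orbT.
have cDelta : c \in Delta by rewrite csDelta ?mem_head.
have sbPhi := word_mx_root (sub_base_root sDelta) bPhi.
case pN: (pos (- (word_mx s *m b))) => pNc.
  have [s1 [e [s2 [-> E]]]] := IH sDelta pN.
  by exists (c :: s1), e, s2; rewrite /= E.
have ps : pos (word_mx s *m b) by rewrite -[word_mx s *m b]opprK root_npos_oppr ?rootN ?pN.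
have sb_c : word_mx s *m b = c.
  apply/eqP; apply: contraLR pNc => /(refl_base_pos cDelta sbPhi ps) pc.
  by rewrite -mulmxA; apply: root_pos_oppr (root_refl (base_root cDelta) sbPhi) pc.
exists [::], c, s; split=> //=.
have sO := in_Weyl_orth (in_Weyl_word sDelta).
rewrite word_mx_rcons -sb_c refl_mx_conj // -!mulmxA (mulmxA (word_mx s)^T) sO mul1mx.
by rewrite refl_mxK ?mulmx1 ?root_neq0.
Qed.

Definition reduced s := {subset s <= Delta} /\
  forall s', {subset s' <= Delta} -> word_mx s' = word_mx s -> (size s <= size s')%N.

Lemma reduced_rcons s b : reduced (rcons s b) -> reduced s.
Proof.
case=> sbDelta sb_min; split=> [e es|s' s'Delta E].
  by rewrite sbDelta // mem_rcons in_cons es orbT.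
rewrite -ltnS -(size_rcons s b) -(size_rcons s' b).
apply: sb_min; last by rewrite !word_mx_rcons E.
move=> e; rewrite mem_rcons in_cons => /orP[/eqP ->|/s'Delta //].
by rewrite sbDelta // mem_rcons mem_head.
Qed.

Lemma reduced_rcons_descent s b : reduced (rcons s b) -> pos (word_mx s *m b).
Proof.
move=> sb_red; have [sbDelta sb_min] := sb_red; have [sDelta _] := reduced_rcons sb_red.
have bDelta : b \in Delta by rewrite sbDelta // mem_rcons mem_head.
have sbPhi := word_mx_root (sub_base_root sDelta) (base_root bDelta).
apply: contraT => /(root_npos_oppr sbPhi) /(exchange_condition sDelta bDelta).
case=> s1 [c [s2 [sE E]]].
have : (size (rcons s b) <= size (s1 ++ s2))%N.
  apply: sb_min; last by rewrite E.
  by move=> e /[!mem_cat] es; rewrite sDelta // sE mem_cat in_cons orbCA es orbT.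
by rewrite size_rcons sE !size_cat /=; lia.
Qed.

Lemma ninv_word_le_size s : {subset s <= Delta} -> (ninv (word_mx s) <= size s)%N.
Proof.
elim/last_ind: s => [|s b IH] sbDelta; first by rewrite ninv1.
have bDelta : b \in Delta by rewrite sbDelta // mem_rcons mem_head.
have /IH : {subset s <= Delta} by move=> e es; rewrite sbDelta // mem_rcons in_cons es orbT.
have := ninv_mul_refl_base (word_mx s) bDelta; rewrite -word_mx_rcons size_rcons.
by case: (pos (word_mx s *m b)); case: (pos (- (word_mx s *m b))) => /=; lia.
Qed.

Lemma ninv_reduced s : reduced s -> ninv (word_mx s) = size s.
Proof.
elim/last_ind: s => [|s b IH] sb_red; first by rewrite ninv1.
have [sbDelta _] := sb_red.
have bDelta : b \in Delta by rewrite sbDelta // mem_rcons mem_head.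
have [sDelta _] := reduced_rcons sb_red.
have sbPhi := word_mx_root (sub_base_root sDelta) (base_root bDelta).
have ps := reduced_rcons_descent sb_red.
have := ninv_mul_refl_base (word_mx s) bDelta.
rewrite ps (negPf (root_pos_oppr sbPhi ps)) -word_mx_rcons size_rcons.
by rewrite -(IH (reduced_rcons sb_red)) /=; lia.
Qed.

Lemma exists_reduced s : {subset s <= Delta} ->
  exists2 s', reduced s' & word_mx s' = word_mx s.
Proof.
move: {2}(size s) (leqnn (size s)) => k; elim: k s => [|k IH] s sk sDelta.
  by exists s => //; split=> // s' _ _; move: sk; rewrite leqn0 => /eqP ->.
have [s_red|s_nred] := pselect (reduced s); first by exists s.
have [s' [s'Delta E s's]] :
    exists s', [/\ {subset s' <= Delta}, word_mx s' = word_mx s & (size s' < size s)%N].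
  apply: contra_notP s_nred => no_shorter; split=> // s' s'Delta E.
  by rewrite leqNgt; apply/negP => s's; apply: no_shorter; exists s'.
have [s'' s''_red E'] := IH s' (leq_trans s's sk) s'Delta.
by exists s''; rewrite // E' E.
Qed.

Lemma is_length_word s : {subset s <= Delta} ->
  is_length Delta (word_mx s) (ninv (word_mx s)).
Proof.
move=> sDelta; have [s' s'_red E] := exists_reduced sDelta; split.
  by exists s'; rewrite -E ninv_reduced //; case: s'_red.
by move=> s'' s''Delta ->; apply: ninv_word_le_size.
Qed.

Lemma is_length_fun w l1 l2 : is_length Delta w l1 -> is_length Delta w l2 -> l1 = l2.
Proof.
move=> [[s1 [s1Delta [<- E1]]] min1] [[s2 [s2Delta [<- E2]]] min2].
by apply/eqP; rewrite eqn_leq min1 ?min2.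
Qed.

Lemma exists_base_dot_gt0 (c : 'cV[R]_n -> nat) g : g != 0 ->
  g = \sum_(d <- Delta) (c d)%:R *: d -> exists2 b, b \in Delta & 0 < dot g b.
Proof.
move=> g0 gE; apply: contrapT => no_b.
suff : dot g g <= 0 by rewrite leNgt dotvv_gt0.
rewrite {2}gE dot_sumr big_seq; apply: (big_ind (fun x : R => x <= 0)) => //.
  by move=> x y; lra.
move=> d dDelta; rewrite dotZr mulr_ge0_le0 // leNgt; apply/negP => gd.
by apply: no_b; exists d.
Qed.

Lemma height_refl_base (c c' : 'cV[R]_n -> nat) g b m : b \in Delta ->
  2 * dot g b / dot b b = m.+1%:R ->
  g = \sum_(d <- Delta) (c d)%:R *: d ->
  refl_mx b *m g = \sum_(d <- Delta) (c' d)%:R *: d ->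
  (\sum_(d <- Delta) c' d + m.+1 = \sum_(d <- Delta) c d)%N.
Proof.
move=> bDelta cartan gE sgE.
have sgE' : refl_mx b *m g = g - m.+1%:R *: b by rewrite refl_mxE cartan.
pose delta_b d : R := if d == b then m.+1%:R else 0.
have c'E d : d \in Delta -> (c' d)%:R = (c d)%:R - delta_b d.
  apply: (base_coef_unique (c := fun d => (c' d)%:R) (c' := fun d => (c d)%:R - delta_b d)).
  rewrite -sgE sgE' [in LHS]gE -(sum_base_delta _ bDelta) -sumrB.
  by apply: eq_bigr => e _; rewrite scalerBl.
have sum_delta : \sum_(d <- Delta) delta_b d = m.+1%:R.
  rewrite (bigD1_seq b) ?base_uniq //= /delta_b eqxx big_seq_cond big1 ?addr0 //.
  by move=> d /andP[_ /negPf ->].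
apply/eqP; rewrite -(eqr_nat R) natrD !natr_sum big_seq (eq_bigr _ c'E) -big_seq.
by rewrite sumrB sum_delta subrK.
Qed.

(* Induction on the height: a non-simple positive root [g] has [(g, b) > 0] for
   some simple [b], [s_b g] is a lower positive root, and [s_g = s_b s_(s_b g) s_b]. *)
Lemma refl_pos_root_word g : g \in Phi -> pos g ->
  exists2 s, {subset s <= Delta} & refl_mx g = word_mx s.
Proof.
move=> + /posP[c]; move: {2}(\sum_(d <- Delta) c d)%N (leqnn (\sum_(d <- Delta) c d)) => k.
elim: k g c => [|k IH] g c hk gPhi gE.
  have c0 d : d \in Delta -> c d = 0%N.
    move=> dDelta; apply/eqP; rewrite -leqn0 (leq_trans _ hk) //.
    by rewrite (bigD1_seq d) ?base_uniq ?leq_addr.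
  by move: (root_neq0 gPhi); rewrite gE big_seq big1 ?eqxx // => d /c0 ->; rewrite scale0r.
have [gDelta|gNDelta] := boolP (g \in Delta).
  by exists [:: g]; [move=> e /[!inE] /eqP ->|rewrite /= mulmx1].
have [b bDelta gb_gt0] := exists_base_dot_gt0 (root_neq0 gPhi) gE.
have bPhi := base_root bDelta.
have [m cartan] : exists m : nat, 2 * dot g b / dot b b = m.+1%:R.
  by apply: intr_gt0_succ; rewrite ?root_cartan_int // divr_gt0 ?mulr_gt0 ?dotvv_gt0 ?root_neq0.
have sgPhi := root_refl bPhi gPhi.
have gb : g != b by apply: contraNneq gNDelta => ->.
have /posP[c' sgE] : pos (refl_mx b *m g) by apply: refl_base_pos => //; apply/posP; exists c.
have hsum := height_refl_base bDelta cartan gE sgE.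
have [s sDelta sE] := IH _ c' ltac:(lia) sgPhi sgE.
exists (b :: rcons s b).
  by move=> e /[!(in_cons, mem_rcons)] /orP[/eqP->|/orP[/eqP->|/sDelta]].
have sbK := refl_mxK (root_neq0 bPhi).
have -> : g = refl_mx b *m (refl_mx b *m g) by rewrite mulmxA sbK mul1mx.
by rewrite refl_mx_conj ?tr_refl_mx // sE /= word_mx_rcons mulmxA.
Qed.

Lemma refl_root_word g : g \in Phi -> exists2 s, {subset s <= Delta} & refl_mx g = word_mx s.
Proof.
move=> gPhi; have [pg|npg] := boolP (pos g); first exact: refl_pos_root_word.
by rewrite -refl_mxN; apply: refl_pos_root_word; rewrite ?rootN ?root_npos_oppr.
Qed.

Lemma in_Weyl_word_base w : in_Weyl Phi w -> exists2 s, {subset s <= Delta} & w = word_mx s.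
Proof.
case=> t [+ ->]; elim: t => [|a t IH] atPhi; first by exists [::].
rewrite word_mx_cons; have [s1 s1Delta ->] := refl_root_word (atPhi a (mem_head a t)).
have [s2 s2Delta ->] : exists2 s, {subset s <= Delta} & word_mx t = word_mx s.
  by apply: IH => e et; rewrite atPhi // in_cons et orbT.
exists (s1 ++ s2); last by rewrite word_mx_cat.
by move=> e /[!mem_cat] /orP[/s1Delta|/s2Delta].
Qed.

Lemma is_length_ninv w : in_Weyl Phi w -> is_length Delta w (ninv w).
Proof. by case/in_Weyl_word_base => s sDelta ->; apply: is_length_word. Qed.

Lemma ninv_tr w : in_Weyl Phi w -> ninv w^T = ninv w.
Proof.
move=> wW; apply: (@is_length_fun w^T); first exact/is_length_ninv/in_Weyl_tr.
have [[s [sDelta [<- ->]]] s_min] := is_length_ninv wW; split.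
  by exists (rev s); rewrite size_rev tr_word_mx; split=> // e; rewrite mem_rev => /sDelta.
move=> s' s'Delta E; rewrite -(size_rev s'); apply: s_min.
  by move=> e; rewrite mem_rev => /s'Delta.
by rewrite -tr_word_mx -E trmxK.
Qed.

Lemma reduced_word_neq1 w : in_Weyl Phi w -> w != 1%:M ->
  exists s b, reduced (rcons s b) /\ w = word_mx (rcons s b).
Proof.
move=> wW w1; have [[s [sDelta [s_len wE]]] s_min] := is_length_ninv wW.
case/lastP: s sDelta s_len wE s_min => [|s b] sbDelta s_len wE s_min.
  by rewrite wE eqxx in w1.
exists s, b; split=> //; split=> // s' s'Delta E.
by rewrite s_len s_min // E.
Qed.

Lemma ninv_refl_base_mul w b : in_Weyl Phi w -> b \in Delta -> pos (w^T *m b) ->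
  ninv (refl_mx b *m w) = (ninv w).+1.
Proof.
move=> wW bDelta pb; have bPhi := base_root bDelta.
have wbPhi := in_Weyl_root (in_Weyl_tr wW) bPhi.
have sbwW := in_Weyl_mul (in_Weyl_refl bPhi) wW.
rewrite -(ninv_tr sbwW) trmx_mul tr_refl_mx.
have := ninv_mul_refl_base w^T bDelta.
by rewrite pb (negPf (root_pos_oppr wbPhi pb)) ninv_tr //= addn0 addn1.
Qed.

Lemma bruhat_step_refl_base_mul w b : in_Weyl Phi w -> b \in Delta -> pos (w^T *m b) ->
  bruhat_step Phi Delta w (refl_mx b *m w).
Proof.
move=> wW bDelta pb; have bPhi := base_root bDelta.
have sbwW := in_Weyl_mul (in_Weyl_refl bPhi) wW.
exists (w^T *m b); split; first exact: in_Weyl_root (in_Weyl_tr wW) bPhi.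
split; first by rewrite refl_mx_conj ?trmxK ?in_Weyl_orthC // !mulmxA in_Weyl_orthC ?mul1mx.
exists (ninv w), (ninv (refl_mx b *m w)).
by split; [exact: is_length_ninv|exact: is_length_ninv|rewrite ninv_refl_base_mul].
Qed.

Lemma bruhat_le_length (u w : 'M[R]_n) : bruhat_le Phi Delta u w -> u = w \/
  exists lu lw, [/\ is_length Delta u lu, is_length Delta w lw & (lu < lw)%N].
Proof.
elim=> [x y [_ [_ [_ [lx [ly ?]]]]]|x|x y z _ IH1 _ IH2].
- by right; exists lx, ly.
- by left.
case: IH1 => [->|[l1 [l2 [len1 len2 l12]]]] //.
case: IH2 => [<-|[l3 [l4 [len3 len4 l34]]]]; first by right; exists l1, l2.
right; exists l1, l4; split=> //.
by rewrite (is_length_fun len2 len3) in l12; apply: ltn_trans l34.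
Qed.

Lemma bruhat_le_anti (u w : 'M[R]_n) :
  bruhat_le Phi Delta u w -> bruhat_le Phi Delta w u -> u = w.
Proof.
move=> /bruhat_le_length[//|[l1 [l2 [len1 len2 l12]]]].
move=> /bruhat_le_length[//|[l3 [l4 [len3 len4 l34]]]].
rewrite (is_length_fun len1 len4) (is_length_fun len2 len3) in l12.
by have := ltn_trans l12 l34; rewrite ltnn.
Qed.

Lemma cartan_same_length g b : g \in Phi -> b \in Phi -> dot g g = dot b b ->
  0 < dot g b -> g = b \/ 2 * dot g b = dot b b.
Proof.
move=> gPhi bPhi gb bg_gt0; have bb_gt0 := dotvv_gt0 (root_neq0 bPhi).
have /intrP[z cartan] := root_cartan_int bPhi gPhi.
have z_gt0 : 0 < z by rewrite -(ltr0z R) -cartan divr_gt0 ?mulr_gt0.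
have gbE : dot g b = z%:~R * dot b b / 2 by rewrite -cartan; field; rewrite lt0r_neq0.
have zz_le4 : z * z <= 4.
  (* [0 <= |g - (z/2) b|^2 = (1 - z^2/4) |b|^2] *)
  have := dotvv_ge0 (g - (z%:~R / 2) *: b).
  rewrite !dotBl !dotBr !dotZl !dotZr gb (dotC b g) gbE => h.
  by rewrite -(ler_int R) intrM; nra.
have [z1|z2] : z = 1 \/ z = 2 by lia.
  by right; rewrite gbE z1; field.
left; apply/eqP; rewrite -subr_eq0; apply/eqP/dotvv_eq0.
by rewrite !dotBl !dotBr gb (dotC b g) gbE z2; field.
Qed.

Lemma Weyl_conj_dot_gt0 g b : g \in Phi -> b \in Phi -> dot g g = dot b b ->
  0 < dot g b -> exists2 w, in_Weyl Phi w & w *m g = b.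
Proof.
move=> gPhi bPhi gb bg_gt0.
have [->|cartan] := cartan_same_length gPhi bPhi gb bg_gt0.
  by exists 1%:M; [exact: in_Weyl1|rewrite mul1mx].
have bb0 := lt0r_neq0 (dotvv_gt0 (root_neq0 bPhi)).
have gbPhi : g - b \in Phi.
  by rewrite -[b in g - b]scale1r -(divff bb0) -{1}cartan -refl_mxE root_refl.
exists (refl_mx (g - b)); first exact: in_Weyl_refl.
apply: refl_mx_swap gb _; apply: contra_neq bb0 => gEb.
by move: cartan; rewrite gEb; lra.
Qed.

Section Irreducible.
Hypothesis irrPhi : irreducible_rs Phi.

Lemma Weyl_orbit_not_orth a b : a \in Phi -> b \in Phi ->
  exists2 w, in_Weyl Phi w & dot (w *m a) b != 0.
Proof.
move=> aPhi bPhi.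
pose P g := `[< forall w, in_Weyl Phi w -> dot (w *m a) g = 0 >].
have P_orth g h : g \in Phi -> h \in Phi -> P g -> ~~ P h -> dot g h = 0.
  move=> gPhi hPhi /asboolP Pg /asboolPn nPh; apply: contrapT => gh0; apply: nPh => w wW.
  have [//|wah0] := eqVneq (dot (w *m a) h) 0; case: gh0.
  have := Pg _ (in_Weyl_mul (in_Weyl_refl hPhi) wW).
  rewrite -mulmxA refl_mxE dotBl dotZl Pg // sub0r => /eqP.
  rewrite oppr_eq0 !mulf_eq0 invr_eq0 pnatr_eq0 (negPf wah0).
  by rewrite (negPf (lt0r_neq0 (dotvv_gt0 (root_neq0 hPhi)))) dotC /= => /eqP.
case: (irrPhi P_orth) => /allP Phi_P.
  move/asboolP: (Phi_P a aPhi) => /(_ _ in_Weyl1); rewrite mul1mx => /eqP.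
  by rewrite (negPf (lt0r_neq0 (dotvv_gt0 (root_neq0 aPhi)))).
move/asboolPn: (Phi_P b bPhi) => not_orth; apply: contrapT => no_w; apply: not_orth => w wW.
by apply/eqP; apply: contraT => wab; case: no_w; exists w.
Qed.

Lemma Weyl_conj_same_length a b : a \in Phi -> b \in Phi -> dot a a = dot b b ->
  exists2 w, in_Weyl Phi w & w *m a = b.
Proof.
move=> aPhi bPhi ab; have [w wW wab] := Weyl_orbit_not_orth aPhi bPhi.
have waPhi := in_Weyl_root wW aPhi.
have wa_len : dot (w *m a) (w *m a) = dot b b.
  by rewrite dot_mulmxl mulmxA in_Weyl_orth ?mul1mx.
have [wab_lt0|wab_gt0|wab0] := ltgtP (dot (w *m a) b) 0.
- have [w' w'W <-] : exists2 w', in_Weyl Phi w' & w' *m - (w *m a) = b.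
    by apply: Weyl_conj_dot_gt0; rewrite ?rootN ?dotNl ?dotNr ?opprK ?oppr_gt0.
  exists (w' *m refl_mx (w *m a) *m w); first by do 2?apply: in_Weyl_mul => //; apply: in_Weyl_refl.
  by rewrite -!mulmxA refl_mx_self ?root_neq0.
- have [w' w'W <-] := Weyl_conj_dot_gt0 waPhi bPhi wa_len wab_gt0.
  by exists (w' *m w); [apply: in_Weyl_mul|rewrite mulmxA].
- by rewrite wab0 eqxx in wab.
Qed.

End Irreducible.

Section HighestRoot.
Variable theta : 'cV[R]_n.
Hypothesis theta_highest : highest_root Phi Delta theta.

Lemma highest_root_root : theta \in Phi.
Proof. by case: theta_highest. Qed.

Lemma dot_highest_base_ge0 b : b \in Delta -> 0 <= dot theta b.
Proof.
move=> bDelta; have bPhi := base_root bDelta; have bb_gt0 := dotvv_gt0 (root_neq0 bPhi).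
rewrite leNgt; apply/negP => tb_lt0.
case: theta_highest => _ /(_ _ (root_refl bPhi highest_root_root)) [c].
set k := 2 * dot theta b / dot b b.
rewrite refl_mxE -/k opprB addrCA subrr addr0 -(sum_base_delta _ bDelta) => E.
have := base_coef_unique (c := fun d => if d == b then k else 0) (c' := fun d => (c d)%:R) E bDelta.
rewrite /= eqxx => cb.
have k_lt0 : k < 0 by rewrite /k pmulr_llt0 ?invr_gt0 // pmulr_rlt0.
by have := ler0n R (c b); rewrite -cb leNgt k_lt0.
Qed.

Lemma dot_highest_pos_ge0 g : pos g -> 0 <= dot theta g.
Proof.
case/posP => c ->; rewrite dot_sumr big_seq sumr_ge0 // => d dDelta.
by rewrite dotZr mulr_ge0 ?dot_highest_base_ge0.
Qed.

Definition stab_descent w :=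
  forall b, b \in Delta -> dot theta b = 0 -> pos (- (w^T *m b)).

Lemma stab_descent_pos w g : stab_descent w -> pos g -> dot theta g = 0 ->
  pos (- (w^T *m g)).
Proof.
move=> w_desc /posP[c gE] tg0.
have ctd0 d : d \in Delta -> (c d)%:R * dot theta d = 0.
  apply: (psumr_seq_eq0 (F := fun e => (c e)%:R * dot theta e)).
    by move=> e eDelta; rewrite mulr_ge0 ?dot_highest_base_ge0.
  by rewrite -[RHS]tg0 gE dot_sumr; apply: eq_bigr => e _; rewrite dotZr.
rewrite gE mulmx_sumr -sumrN; apply: pos_sum => d dDelta.
rewrite -scalemxAr -scalerN; have /eqP := ctd0 d dDelta.
by rewrite mulf_eq0 => /orP[/eqP ->|/eqP td0]; rewrite ?scale0r ?pos0 ?posMn ?w_desc.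
Qed.

Lemma not_stab_descent w : in_Weyl Phi w -> ~ stab_descent w ->
  exists b, [/\ b \in Delta, dot theta b = 0 & pos (w^T *m b)].
Proof.
move=> wW w_ndesc; apply: contrapT => no_b; apply: w_ndesc => b bDelta tb0.
apply: contraT => npb; case: no_b; exists b; split=> //.
rewrite -[_ *m b]opprK; apply: root_npos_oppr npb.
exact/rootN/(in_Weyl_root (in_Weyl_tr wW))/base_root.
Qed.

Lemma stab_descent_unique a (u v : 'M[R]_n) : in_Weyl Phi u -> in_Weyl Phi v ->
  u *m a = theta -> v *m a = theta -> stab_descent u -> stab_descent v -> u = v.
Proof.
move=> uW vW ua va u_desc v_desc; pose x := v *m u^T.
have xW : in_Weyl Phi x by apply: in_Weyl_mul vW (in_Weyl_tr uW).
have xt : x *m theta = theta.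
  by rewrite -[in LHS]ua -mulmxA (mulmxA u^T) in_Weyl_orth // mul1mx va.
have xu : x *m u = v by rewrite -mulmxA in_Weyl_orth ?mulmx1.
have [x1|x_neq1] := eqVneq x 1%:M; first by rewrite -xu x1 mul1mx.
have xT_neq1 : x^T != 1%:M by apply: contraNneq x_neq1 => xT1; rewrite -[x]trmxK xT1 trmx1.
have [s [b [sb_red xTE]]] := reduced_word_neq1 (in_Weyl_tr xW) xT_neq1.
have [sbDelta _] := sb_red; have bDelta : b \in Delta by rewrite sbDelta // mem_rcons mem_head.
have bPhi := base_root bDelta.
have pg := reduced_rcons_descent sb_red; set g := word_mx s *m b in pg.
have xTb : x^T *m b = - g by rewrite xTE word_mx_rcons -mulmxA refl_mx_self ?mulmxN ?root_neq0.
have tb : dot theta b = - dot theta g by rewrite -dotNr -xTb dot_mulmxr trmxK xt.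
have tb0 : dot theta b = 0.
  by apply/eqP; rewrite eq_le dot_highest_base_ge0 // andbT tb oppr_le0 dot_highest_pos_ge0.
have tg0 : dot theta g = 0 by apply/eqP; rewrite -oppr_eq0 -tb tb0.
have ugPhi : u^T *m g \in Phi.
  apply: in_Weyl_root (in_Weyl_tr uW) _; rewrite -[g]opprK -xTb.
  exact/rootN/(in_Weyl_root (in_Weyl_tr xW)).
have pug : pos (u^T *m g).
  by move: (v_desc b bDelta tb0); rewrite -xu trmx_mul -mulmxA xTb mulmxN opprK.
by case/negP: (root_pos_oppr ugPhi pug); apply: stab_descent_pos.
Qed.

(* Multiplying on the left by a simple reflection that fixes [theta] and is not
   a left descent stays among the solutions and raises the length by one. *)
Lemma climb_to_stab_descent a (u : 'M[R]_n) : in_Weyl Phi u -> u *m a = theta ->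
  exists2 w, [/\ in_Weyl Phi w, w *m a = theta & stab_descent w] & bruhat_le Phi Delta u w.
Proof.
move=> uW ua; move: {2}(size (undup Phi) - ninv u)%N (leqnn (size (undup Phi) - ninv u)) => k.
elim: k u uW ua => [|k IH] u uW ua hk;
  have [u_desc|/(not_stab_descent uW)[b [bDelta tb0 pb]]] := pselect (stab_descent u);
  try by exists u; [split|apply: rt_refl].
all: have sbu_len := ninv_refl_base_mul uW bDelta pb.
all: have := ninv_le_roots (refl_mx b *m u); rewrite sbu_len => sbu_le.
  by lia.
have sbuW := in_Weyl_mul (in_Weyl_refl (base_root bDelta)) uW.
have sbua : refl_mx b *m u *m a = theta by rewrite -mulmxA ua refl_mx_orth // dotC.
have [w w_desc le_w] := IH _ sbuW sbua ltac:(rewrite sbu_len; lia).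
by exists w => //; apply: rt_trans le_w; apply: rt_step; apply: bruhat_step_refl_base_mul.
Qed.

End HighestRoot.
End RootSystem.

Theorem mainTheorem13 (R : realType) (n : nat) (Phi Delta : seq 'cV[R]_n)
    (theta alpha : 'cV[R]_n) :
  is_root_system Phi -> irreducible_rs Phi -> is_base Phi Delta ->
  highest_root Phi Delta theta ->
  alpha \in Phi -> dot alpha alpha = dot theta theta ->
  let S := fun w : 'M[R]_n => in_Weyl Phi w /\ invmx w *m theta = alpha in
  let maximal := fun w => S w /\ (forall u, S u -> bruhat_le Phi Delta w u -> u = w) in
  exists w, maximal w /\ (forall w', maximal w' -> w' = w).
Proof.
move=> rsPhi irrPhi baseDelta highest alphaPhi alpha_len S maximal.
have S_E w : S w <-> in_Weyl Phi w /\ w *m alpha = theta.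
  split=> -[wW wE]; split=> //; rewrite -wE (invmx_Weyl rsPhi wW) mulmxA.
    by rewrite (in_Weyl_orthC rsPhi wW) mul1mx.
  by rewrite (in_Weyl_orth rsPhi wW) mul1mx.
have thetaPhi := highest_root_root highest.
have [w0 w0W w0a] := Weyl_conj_same_length rsPhi irrPhi alphaPhi thetaPhi alpha_len.
have [wt [wtW wta wt_desc] _] := climb_to_stab_descent rsPhi baseDelta w0W w0a.
have le_wt u : S u -> bruhat_le Phi Delta u wt.
  case/S_E => uW ua; have [w [wW wa w_desc] le_w] := climb_to_stab_descent rsPhi baseDelta uW ua.
  by rewrite -(stab_descent_unique rsPhi baseDelta highest wW wtW wa wta w_desc wt_desc).
exists wt; split; first split; first exact/S_E.
  by move=> u Su /(bruhat_le_anti (le_wt u Su)).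
by move=> w' [Sw' w'_max]; apply/esym/w'_max; [exact/S_E|exact: le_wt].
Qed.
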